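(* Let $(G,\omega)$ be a weighted graph of genus $g=g(G,\omega)$. Then: (1) for every $D\in\operatorname{Div}(G,\omega)$, $r_{(G,\omega)}(D)-r_{(G,\omega)}(K_{(G,\omega)}-D)=\deg D-g+1$; (2) for every $D,D'\in\operatorname{Div}(G)$ with $D\sim D'$ (linear equivalence on $G$), $r_{(G,\omega)}(D)=r_{(G,\omega)}(D')$.
   Context: Graphs are finite and connected, loops and multiple edges allowed. $\operatorname{Div}(G)$ is the free abelian group on $V(G)$. Define $(v\cdot w)$ as the number of edges joining $v,w$ if $v\ne w$, and $(v\cdot v)=-\operatorname{val}(v)+2\operatorname{loop}(v)$ (valency with loops counted twice). $T_v=\sum_w(v\cdot w)w$, $\operatorname{Prin}(G)$ is generated by the $T_v$, $D\sim D'$ iff $D-D'\in\operatorname{Prin}(G)$. The rank $r_G(D)$ is $-1$ if no effective divisor is equivalent to $D$, and otherwise the maximum $k\ge0$ such that for every effective $E$ of degree $k$ some effective divisor is equivalent to $D-E$. For a graph $H$ with loops, $\widehat H$ is obtained by inserting one new vertex in each loop-edge, and $r^{\#}_H(D):=r_{\widehat H}(D)$ (divisor extended by zero). A weighted graph is a pair $(G,\omega)$ with $\omega:V(G)\to\mathbb{Z}_{\ge0}$; its genus is $g(G,\omega)=b_1(G)+\sum_v\omega(v)$, where $b_1(G)=|E|-|V|+1$. The virtual graph $G^\omega$ is obtained from $G$ by attaching $\omega(v)$ new loops at each vertex $v$; $V(G^\omega)=V(G)$ and $\operatorname{Div}(G,\omega):=\operatorname{Div}(G^\omega)=\operatorname{Div}(G)$.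 Set $K_{(G,\omega)}=\sum_{v}(\operatorname{val}_{G^\omega}(v)-2)v$ and $r_{(G,\omega)}(D):=r^{\#}_{G^\omega}(D)$. *)

From HB Require Import structures.
From mathcomp Require Import all_boot all_order all_algebra.
From Stdlib Require Import ClassicalEpsilon.
Set Implicit Arguments. Unset Strict Implicit. Unset Printing Implicit Defensive.
Import Order.TTheory GRing.Theory Num.Theory.
Local Open Scope ring_scope.

(* A finite multigraph: vertex set, edge set, and the (unordered) pair of
   endpoints of each edge, recorded as an ordered pair. A loop is an edge
   whose two endpoints coincide. *)
Record mgraph := MGraph {
  vtx : finType;
  edg : finType;
  ends : edg -> vtx * vtx
}.

Section Graph.
Variable G : mgraph.

Definition is_loop (e : edg G) : bool := (ends e).1 == (ends e).2.

Definition adj (v w : vtx G) : bool :=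
  [exists e : edg G, (ends e == (v, w)) || (ends e == (w, v))].

Definition connected : Prop :=
  (0 < #|vtx G|)%N /\ forall v w : vtx G, connect adj v w.

(* valency, loops counted twice *)
Definition valency (v : vtx G) : nat :=
  (\sum_(e : edg G) (((ends e).1 == v) + ((ends e).2 == v)))%N.

Definition nloops (v : vtx G) : nat := #|[pred e : edg G | ends e == (v, v)]|.

Definition inter (v w : vtx G) : int :=
  if v == w then - (valency v)%:Z + 2 * (nloops v)%:Z
  else (#|[pred e : edg G | (ends e == (v, w)) || (ends e == (w, v))]|)%:Z.

Definition divisor := vtx G -> int.

Definition deg (D : divisor) : int := \sum_(v : vtx G) D v.

Definition effective (D : divisor) : Prop := forall v, 0 <= D v.

Definition Tdiv (v : vtx G) : divisor := fun w => inter v w.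

Definition principal (P : divisor) : Prop :=
  exists c : vtx G -> int, forall w, P w = \sum_(v : vtx G) c v * Tdiv v w.

Definition lin_equiv (D D' : divisor) : Prop :=
  principal (fun w => D w - D' w).

Definition equiv_effective (D : divisor) : Prop :=
  exists F : divisor, effective F /\ lin_equiv D F.

Definition rank_prop (D : divisor) (k : nat) : Prop :=
  forall E : divisor, effective E -> deg E = k%:Z ->
    equiv_effective (fun v => D v - E v).

Definition is_rank (D : divisor) (r : int) : Prop :=
  (~ equiv_effective D /\ r = -1) \/
  (equiv_effective D /\ exists k : nat, r = k%:Z /\ rank_prop D k /\
      forall k' : nat, rank_prop D k' -> (k' <= k)%N).

Definition rank (D : divisor) : int :=
  epsilon (inhabits 0) (is_rank D).

End Graph.

(* \hat H : insert one new vertex in each loop-edge of H *)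
Definition loop_edge (H : mgraph) := {e : edg H | is_loop e}.

Definition hat_ends (H : mgraph) (e : (edg H + loop_edge H)%type)
  : (vtx H + loop_edge H) * (vtx H + loop_edge H) :=
  match e with
  | inl e0 =>
      match (insub e0 : option (loop_edge H)) with
      | Some l => (inl (ends e0).1, inr l)
      | None => (inl (ends e0).1, inl (ends e0).2)
      end
  | inr l => (inr l, inl (ends (val l)).1)
  end.

Definition hat (H : mgraph) : mgraph :=
  @MGraph (vtx H + loop_edge H)%type (edg H + loop_edge H)%type (@hat_ends H).

Definition hat_ext (H : mgraph) (D : divisor H) : divisor (hat H) :=
  fun x => match x with inl v => D v | inr _ => 0 end.

Definition rank_sharp (H : mgraph) (D : divisor H) : int :=
  rank (hat_ext D).

Definition new_loops (G : mgraph) (om : vtx G -> nat) :=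
  {v : vtx G & 'I_(om v)}.

Definition virt_ends (G : mgraph) (om : vtx G -> nat)
  (e : (edg G + new_loops om)%type) : vtx G * vtx G :=
  match e with
  | inl e0 => ends e0
  | inr l => (tag l, tag l)
  end.

(* the virtual graph G^omega: omega(v) new loops attached at v *)
Definition virt (G : mgraph) (om : vtx G -> nat) : mgraph :=
  @MGraph (vtx G) (edg G + new_loops om)%type (@virt_ends G om).

Definition b1 (G : mgraph) : int := (#|edg G|)%:Z - (#|vtx G|)%:Z + 1.

Definition wgenus (G : mgraph) (om : vtx G -> nat) : int :=
  b1 G + \sum_(v : vtx G) (om v)%:Z.

Definition wcanonical (G : mgraph) (om : vtx G -> nat) : divisor G :=
  fun v => (@valency (virt om) v)%:Z - 2.

Definition wrank (G : mgraph) (om : vtx G -> nat) (D : divisor G) : int :=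
  @rank_sharp (virt om) D.

(* The rank on (G, omega) is the rank on the loopless connected graph obtained from G^omega by
   subdividing every loop. Subdivision vertices are 2-valent, so the canonical divisor of that
   graph is K_(G,omega) extended by zero; its first Betti number is g(G, omega), and principal
   divisors of G extend to principal ones. It thus suffices to prove Riemann-Roch for a connected
   loopless graph.

   There we follow Baker-Norine and Cori-Le Borgne. An injective pi : V -> Z orders the
   vertices, and nu_pi(v), the number of edges from v to pi-earlier vertices minus one, has
   degree g - 1 and satisfies nu_pi + nu_(-pi) = K. No nu_pi is equivalent to an effective
   divisor: look where a firing script is minimal. Dhar's burning algorithm, run on a q-reduced
   representative, shows that every D is equivalent to an effective divisor or nu_pi - D is,
   for some pi. Hence r(D) + 1 is the least value of deg^+(D' - nu_pi) over D' ~ D and all pi,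
   and reversing pi together with deg^+(X) - deg^+(-X) = deg X yields
   r(D) - r(K - D) = deg D - g + 1. *)

From HB Require Import structures.
From mathcomp Require Import all_boot all_order all_algebra.
From Stdlib Require Import Classical ClassicalEpsilon FunctionalExtensionality PropExtensionality.
From mathcomp Require Import zify ring.
Set Implicit Arguments. Unset Strict Implicit. Unset Printing Implicit Defensive.
Import Order.TTheory GRing.Theory Num.Theory.
Local Open Scope ring_scope.


Lemma sum_pred1_nat (T : finType) (b : T) : (\sum_(w : T) ((w == b) : nat) = 1)%N.
Proof. by rewrite (bigD1 b) //= eqxx big1 // => w /negbTE ->. Qed.

Lemma card_predE_sum (T : finType) (P : pred T) : #|[pred x | P x]| = (\sum_x (P x : nat))%N.
Proof. by rewrite -sum1_card big_mkcond /=; apply: eq_bigr => x _; rewrite inE; case: (P x). Qed.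

Lemma sum_delta (T : finType) (q : T) (c : int) : \sum_(v : T) (v == q)%:Z * c = c.
Proof.
by rewrite (bigD1 q) //= eqxx mul1r big1 ?addr0 // => v /negbTE ->; rewrite mul0r.
Qed.

Lemma ler_sum_term (T : finType) (F : T -> int) i :
  (forall j, 0 <= F j) -> F i <= \sum_j F j.
Proof. by move=> F0; rewrite (bigD1 i) //= lerDl sumr_ge0. Qed.

Lemma leq_sum_subpred (T : finType) (P Q : pred T) (F : T -> nat) :
  (forall x, P x -> Q x) -> (\sum_(x | P x) F x <= \sum_(x | Q x) F x)%N.
Proof.
move=> PQ; rewrite big_mkcond [X in (_ <= X)%N]big_mkcond /=; apply: leq_sum => x _.
by case: ifP => // /PQ ->.
Qed.

Lemma ex_minn_prop (P : nat -> Prop) :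
  (exists n, P n) -> exists n, P n /\ forall m, P m -> (n <= m)%N.
Proof.
pose b n := if excluded_middle_informative (P n) then true else false.
have bP n : reflect (P n) (b n) by rewrite /b; case: excluded_middle_informative; constructor.
move=> [n Pn]; have ex_b : exists n, b n by exists n; apply/bP.
case: (ex_minnP ex_b) => m /bP Pm min_m; exists m; split=> // k /bP; exact: min_m.
Qed.

Section EdgeMultiplicity.
Variable G : mgraph.
Implicit Types v w : vtx G.

Definition edge_mult v w : nat :=
  #|[pred e : edg G | (ends e == (v, w)) || (ends e == (w, v))]|.

Definition adjm v w : nat := if v == w then 0%N else edge_mult v w.

Definition loopfree_valency v : nat := (\sum_w adjm v w)%N.

Lemma edge_multC v w : edge_mult v w = edge_mult w v.
Proof. by apply: eq_card => e; rewrite !inE orbC. Qed.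

Lemma adjmC v w : adjm v w = adjm w v.
Proof. by rewrite /adjm eq_sym edge_multC. Qed.

Lemma adjmii v : adjm v v = 0%N.
Proof. by rewrite /adjm eqxx. Qed.

Lemma loopfree_valencyE w : loopfree_valency w = (\sum_v adjm v w)%N.
Proof. by apply: eq_bigr => v _; rewrite adjmC. Qed.

Lemma valencyE v : valency v = (loopfree_valency v + 2 * nloops v)%N.
Proof.
rewrite /valency /loopfree_valency /nloops card_predE_sum.
have -> : (\sum_w adjm v w = \sum_w \sum_e
    ((w != v) && ((ends e == (v, w)) || (ends e == (w, v))) : nat))%N.
  apply: eq_bigr => w _; rewrite /adjm /edge_mult card_predE_sum eq_sym.
  by case: (w == v) => //=; rewrite big1.
rewrite exchange_big /= big_distrr -big_split /=; apply: eq_bigr => e _.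
case: (ends e) => a b /=.
under eq_bigr do rewrite !xpair_eqE.
rewrite xpair_eqE.
have [av|av] := eqVneq a v; have [bv|bv] := eqVneq b v => /=.
- by rewrite big1 // => w _; rewrite av bv; case: (eqVneq w v).
- rewrite muln0 addn0 (eq_bigr (fun w => (w == b) : nat)) ?sum_pred1_nat // => w _.
  by rewrite andbF orbF; case: (eqVneq w b) => [->|wb]; rewrite ?bv ?andbF.
- rewrite muln0 addn0 (eq_bigr (fun w => (w == a) : nat)) ?sum_pred1_nat // => w _.
  by rewrite andbT; case: (eqVneq w a) => [->|wa]; rewrite ?av ?andbF.
- by rewrite muln0 addn0 big1 // => w _; rewrite !andbF.
Qed.

Lemma interE v w : inter v w = (adjm v w)%:Z - (v == w)%:Z * (loopfree_valency v)%:Z.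
Proof.
rewrite /inter /adjm; case: (eqVneq v w) => [_|_] /=; last by rewrite mul0r subr0.
by rewrite valencyE PoszD PoszM mul1r; lia.
Qed.

(* [lapl c] is the principal divisor [\sum_v c v * T_v]. *)
Definition lapl (c : vtx G -> int) : divisor G :=
  fun w => \sum_v (adjm v w)%:Z * (c v - c w).

Lemma principalP (P : divisor G) : principal P <-> exists c, P =1 lapl c.
Proof.
have lapl_sumT c w : \sum_v c v * Tdiv v w = lapl c w.
  rewrite /lapl /Tdiv.
  under eq_bigr do rewrite interE mulrBr.
  under [in RHS]eq_bigr do rewrite mulrBr.
  rewrite !sumrB; congr (_ - _); first by apply: eq_bigr => v _; rewrite mulrC.
  rewrite (bigD1 w) //= big1 ?addr0; last by move=> v /negbTE ->; rewrite /= mul0r mulr0.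
  rewrite eqxx mul1r loopfree_valencyE mulrC -mulr_suml.
  by rewrite (big_morph Posz PoszD (erefl _)).
by split=> -[c Pc]; exists c => w; rewrite Pc lapl_sumT.
Qed.

Lemma principal_lapl c : principal (lapl c).
Proof. by apply/principalP; exists c. Qed.

Lemma lapl_ge0 c w : c w = 0 -> (forall v, 0 <= c v) -> 0 <= lapl c w.
Proof. by move=> cw c0; apply: sumr_ge0 => v _; rewrite cw subr0 mulr_ge0. Qed.

Lemma lapl_ge c w u : c w = 0 -> (forall v, 0 <= c v) -> (adjm u w)%:Z * c u <= lapl c w.
Proof.
move=> cw c0; rewrite -[c u]subr0 -cw.
apply: (ler_sum_term (F := fun v => (adjm v w)%:Z * (c v - c w))) => v.
by rewrite cw subr0 mulr_ge0.
Qed.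

Lemma sum_lapl c : \sum_w lapl c w = 0.
Proof.
set X := \sum_w _.
have XN : X = - X.
  rewrite {1}/X exchange_big -sumrN; apply: eq_bigr => w _; rewrite -sumrN.
  by apply: eq_bigr => v _; rewrite adjmC -mulrN opprB.
by move: XN; lia.
Qed.

End EdgeMultiplicity.

Section LinearEquivalence.
Variable G : mgraph.
Implicit Types D E F P : divisor G.

Lemma principal_add P P1 P2 :
  principal P1 -> principal P2 -> P =1 (fun w => P1 w + P2 w) -> principal P.
Proof.
move=> /principalP[c1 P1E] /principalP[c2 P2E] PE; apply/principalP.
exists (fun v => c1 v + c2 v) => w; rewrite PE P1E P2E /lapl -big_split /=.
by apply: eq_bigr => v _; rewrite -mulrDr; congr (_ * _); ring.
Qed.

Lemma principal_opp P P1 : principal P1 -> P =1 (fun w => - P1 w) -> principal P.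
Proof.
move=> /principalP[c P1E] PE; apply/principalP.
exists (fun v => - c v) => w; rewrite PE P1E /lapl -sumrN.
by apply: eq_bigr => v _; rewrite -mulrN; congr (_ * _); ring.
Qed.

Lemma principal0 P : P =1 (fun _ => 0) -> principal P.
Proof.
move=> PE; apply/principalP; exists (fun _ => 0) => w.
by rewrite PE /lapl big1 // => v _; rewrite subr0 mulr0.
Qed.

Lemma principal_eqfun P P1 : principal P1 -> P =1 P1 -> principal P.
Proof.
by move=> P1p PE; apply: (principal_add P1p (principal0 (frefl _))) => w; rewrite PE addr0.
Qed.

Lemma lin_equiv_eqfun D D' : D =1 D' -> lin_equiv D D'.
Proof. by move=> DE; apply: principal0 => w; rewrite DE subrr. Qed.

Lemma lin_equiv_refl D : lin_equiv D D.
Proof. exact: lin_equiv_eqfun. Qed.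

Lemma lin_equiv_sym D D' : lin_equiv D D' -> lin_equiv D' D.
Proof. by move=> DD'; apply: (principal_opp DD') => w; rewrite opprB. Qed.

Lemma lin_equiv_trans D1 D2 D3 : lin_equiv D1 D2 -> lin_equiv D2 D3 -> lin_equiv D1 D3.
Proof. by move=> D12 D23; apply: (principal_add D12 D23) => w; ring. Qed.

Lemma lin_equiv_lapl D c : lin_equiv D (fun w => D w + lapl c w).
Proof. by apply: (principal_opp (principal_lapl c)) => w /=; ring. Qed.

Lemma deg_principal P : principal P -> deg P = 0.
Proof. by move=> /principalP[c PE]; rewrite /deg (eq_bigr _ (fun w _ => PE w)) sum_lapl. Qed.

Lemma degB D E : deg (fun v => D v - E v) = deg D - deg E.
Proof. exact: sumrB. Qed.

Lemma lin_equiv_deg D D' : lin_equiv D D' -> deg D = deg D'.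
Proof. by move/deg_principal; rewrite degB => /eqP; rewrite subr_eq0 => /eqP. Qed.

Lemma equiv_effective_lin D D' : lin_equiv D D' -> equiv_effective D -> equiv_effective D'.
Proof.
move=> DD' [F [F_eff DF]]; exists F; split=> //.
exact: lin_equiv_trans (lin_equiv_sym DD') DF.
Qed.

Lemma equiv_effective_eqfun D D' : D =1 D' -> equiv_effective D -> equiv_effective D'.
Proof. by move/lin_equiv_eqfun; apply: equiv_effective_lin. Qed.

Lemma rank_prop_lin D D' k : lin_equiv D D' -> rank_prop D k -> rank_prop D' k.
Proof.
move=> DD' rk E E_eff degE; apply: (equiv_effective_lin _ (rk E E_eff degE)).
by apply: (principal_eqfun DD') => w /=; ring.
Qed.

Lemma equiv_effective_rank_prop0 D : equiv_effective D <-> rank_prop D 0.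
Proof.
split=> [DF E E_eff degE|rk0].
  apply: equiv_effective_eqfun DF => v.
  by rewrite ((psumr_eq0P (P := xpredT) (fun v _ => E_eff v) degE) v) ?subr0.
apply: equiv_effective_eqfun (rk0 (fun _ => 0) (fun _ => lexx 0) _); last by rewrite /deg big1.
by move=> v; rewrite subr0.
Qed.

Lemma is_rank_uniq D r1 r2 : is_rank D r1 -> is_rank D r2 -> r1 = r2.
Proof.
case=> [[nD ->]|[DF [k1 [-> [rk1 max1]]]]]; case=> [[nD' ->]|[DF' [k2 [-> [rk2 max2]]]]] //.
by congr Posz; apply/eqP; rewrite eqn_leq max1 // max2.
Qed.

Lemma rankE D r : is_rank D r -> rank D = r.
Proof.
move=> rD; apply: (is_rank_uniq _ rD); rewrite /rank.
by apply: (epsilon_spec (inhabits 0) (is_rank D)); exists r.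
Qed.

Lemma is_rank_lin D D' r : lin_equiv D D' -> is_rank D r -> is_rank D' r.
Proof.
move=> DD' [[nD ->]|[DF [k [-> [rk max_k]]]]].
  by left; split=> //; move/(equiv_effective_lin (lin_equiv_sym DD')).
right; split; first exact: equiv_effective_lin DF.
exists k; split=> //; split; first exact: rank_prop_lin rk.
by move=> k' /(rank_prop_lin (lin_equiv_sym DD')); apply: max_k.
Qed.

Lemma rank_lin D D' : lin_equiv D D' -> rank D = rank D'.
Proof.
move=> DD'; rewrite /rank; congr (epsilon _); apply: functional_extensionality => r.
by apply: propositional_extensionality; split; apply: is_rank_lin => //; apply: lin_equiv_sym.
Qed.

End LinearEquivalence.

Section Distance.
Variable G : mgraph.
Variable q : vtx G.
Hypothesis G_conn : forall v w : vtx G, connect (@adj G) v w.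
Implicit Types u v w : vtx G.

Fixpoint within (n : nat) v : bool :=
  if n is n'.+1 then within n' v || [exists u, within n' u && (0 < adjm u v)%N]
  else v == q.

Lemma adj_adjm u v : adj u v -> u = v \/ (0 < adjm u v)%N.
Proof.
have [->|uv] := eqVneq u v; first by left.
move=> /existsP[e uv_e]; right; rewrite /adjm (negbTE uv) /edge_mult; apply/card_gt0P.
by exists e; rewrite inE.
Qed.

Lemma within_adjm n u v : within n u -> (0 < adjm u v)%N -> within n.+1 v.
Proof. by move=> nu uv /=; apply/orP; right; apply/existsP; exists u; rewrite nu. Qed.

Lemma exists_within v : exists n, within n v.
Proof.
have /connectP[p p_adj ->] := G_conn q v.
have : exists n, within n q by exists 0%N => /=.
elim: p q p_adj => [|y p IHp] x //= /andP[xy p_adj] [n xn].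
apply: IHp => //; case: (adj_adjm xy) => [<-|xy_gt0]; first by exists n.
by exists n.+1; apply: within_adjm xy_gt0.
Qed.

Definition qdist v : nat := ex_minn (exists_within v).

Lemma within_qdist v : within (qdist v) v.
Proof. by rewrite /qdist; case: ex_minnP. Qed.

Lemma qdist_min v n : within n v -> (qdist v <= n)%N.
Proof. by rewrite /qdist; case: ex_minnP => m _ min_m /min_m. Qed.

Lemma qdist_q : qdist q = 0%N.
Proof. by apply/eqP; rewrite -leqn0; apply: qdist_min => /=. Qed.

Lemma qdist_eq0 v : qdist v = 0%N -> v = q.
Proof. by move=> dv; have := within_qdist v; rewrite dv /= => /eqP. Qed.

Lemma qdist_adjm u v : (0 < adjm u v)%N -> (qdist v <= (qdist u).+1)%N.
Proof. by move=> uv; apply: qdist_min; apply: within_adjm uv; apply: within_qdist. Qed.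

Lemma qdist_parent v : v != q -> exists u, (0 < adjm u v)%N /\ (qdist u).+1 = qdist v.
Proof.
move=> vq; case dv: (qdist v) => [|n]; first by move: vq; rewrite (qdist_eq0 dv) eqxx.
have := within_qdist v; rewrite dv /= => /orP[nv|/existsP[u /andP[nu uv]]].
  by have := qdist_min nv; rewrite dv ltnn.
exists u; split=> //; have := qdist_min nu; have := qdist_adjm uv.
by rewrite dv; lia.
Qed.

(* Firing the ball of radius [n - 1] a large number of times fixes the sphere of radius [n]. *)
Lemma fire_ball (D : divisor G) n : exists D', [/\ lin_equiv D D',
  (forall v, (n <= qdist v)%N -> D v <= D' v) &
  (forall v, v != q -> qdist v = n -> 0 <= D' v)].
Proof.
pose T := (\sum_v `|D v|)%N.
pose c x : int := if (qdist x < n)%N then T%:Z else 0.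
have c0 v : 0 <= c v by rewrite /c; case: ifP.
have c_far v : (n <= qdist v)%N -> c v = 0 by rewrite /c leqNgt => /negbTE ->.
exists (fun w => D w + lapl c w); split; first exact: lin_equiv_lapl.
  by move=> v /c_far cv; rewrite lerDl lapl_ge0.
move=> v vq dv; have [u [uv du]] := qdist_parent vq.
have cu : c u = T%:Z by rewrite /c -dv -du ltnSn.
have := lapl_ge u (c_far _ (eq_leq (esym dv))) c0; rewrite cu.
have Dv_T : `|D v|%:Z <= T%:Z by rewrite lez_nat /T (bigD1 v) //= leq_addr.
have T_mul : T%:Z <= (adjm u v)%:Z * T%:Z by rewrite -PoszM lez_nat leq_pmull.
have := lez_abs (- D v); rewrite abszN; lia.
Qed.

Lemma equiv_nonneg_off_q (D : divisor G) :
  exists D', lin_equiv D D' /\ forall v, v != q -> 0 <= D' v.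
Proof.
pose N := (\max_v qdist v)%N.
have dN v : (qdist v <= N)%N by apply: leq_bigmax.
suff /(_ N.+1) [D' [DD' D'_ge0]] : forall j, exists D', lin_equiv D D' /\
    forall v, v != q -> (N.+1 - j <= qdist v)%N -> 0 <= D' v.
  by exists D'; split=> // v vq; apply: D'_ge0; rewrite ?subnn.
elim=> [|j [D1 [DD1 D1_ge0]]].
  by exists D; split=> [|v _]; [apply: lin_equiv_refl | rewrite subn0 ltnNge dN].
have [D2 [D12 D12_le D2_ge0]] := fire_ball D1 (N - j).
exists D2; split; first exact: lin_equiv_trans DD1 D12.
move=> v vq; rewrite subSS => dv.
have [dvE|dv'] := eqVneq (N - j)%N (qdist v); first exact: D2_ge0 _ vq (esym dvE).
have lt_dv : (N - j < qdist v)%N by rewrite ltn_neqAle dv' dv.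
by apply: le_trans (D12_le _ dv); apply: D1_ge0 => //; lia.
Qed.

End Distance.

Definition pos_part (x : int) : nat := if x is Posz n then n else 0%N.

Lemma pos_partNB x : (pos_part x)%:Z - (pos_part (- x))%:Z = x.
Proof. by case: x => [[|n]|n] /=; lia. Qed.

Lemma pos_part_id x : 0 <= x -> (pos_part x)%:Z = x.
Proof. by case: x. Qed.

Lemma leq_pos_part x y : x <= y -> (pos_part x <= pos_part y)%N.
Proof. by case: x => [n|n]; case: y => [m|m] //=; rewrite ?NegzE; lia. Qed.

Section Orientation.
Variable G : mgraph.
Implicit Types (v w : vtx G) (pi : vtx G -> int) (X : divisor G).

Lemma sum_valency : (\sum_(v : vtx G) valency v = 2 * #|edg G|)%N.
Proof.
rewrite /valency exchange_big /= -sum1_card big_distrr /=; apply: eq_bigr => e _.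
rewrite big_split /= muln1.
rewrite (eq_bigr (fun v => (v == (ends e).1) : nat)) ?sum_pred1_nat; last first.
  by move=> v _; rewrite eq_sym.
by rewrite (eq_bigr (fun v => (v == (ends e).2) : nat)) ?sum_pred1_nat // => v _; rewrite eq_sym.
Qed.

Definition canonical_div : divisor G := fun v => (valency v)%:Z - 2.

Lemma deg_canonical_div : deg canonical_div = 2 * (b1 G - 1).
Proof.
rewrite /deg /canonical_div sumrB -(big_morph Posz PoszD (erefl _)) sum_valency sumr_const /b1.
by rewrite PoszM -mulr_natr; ring.
Qed.

(* An injective [pi] orders the vertices; orienting every edge towards the larger end gives an
   acyclic orientation, and [orient_div pi v] is the indegree of [v] minus one. *)
Definition orient_div pi : divisor G :=
  fun v => (\sum_(w | (pi w < pi v)%R) adjm v w)%N%:Z - 1.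

Lemma orient_div_not_equiv_effective pi : (0 < #|vtx G|)%N -> injective pi ->
  ~ equiv_effective (orient_div pi).
Proof.
move=> /card_gt0P[v0 _] pi_inj [F [F_eff /principalP[c cE]]].
pose s0 := Order.arg_min v0 xpredT c.
have min_s0 y : c s0 <= c y by rewrite /s0; case: arg_minP => // s _ min_s; apply: min_s.
pose s := Order.arg_min s0 (fun x => c x == c s0) pi.
have [cs min_s] : c s = c s0 /\ forall y, c y = c s0 -> pi s <= pi y.
  by rewrite /s; case: arg_minP => //= x /eqP cx min_x; split=> // y /eqP /min_x.
have in_lt : (\sum_(w | (pi w < pi s)%R) adjm s w)%N%:Z <= lapl c s.
  rewrite /lapl [X in _ <= X](bigID (fun w => pi w < pi s)) /= -[X in X <= _]addr0.
  apply: lerD; last by apply: sumr_ge0 => v _; rewrite mulr_ge0 // subr_ge0 cs.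
  rewrite (big_morph Posz PoszD (erefl _)); apply: ler_sum => v lt_vs.
  rewrite adjmC -{1}[(adjm v s)%:Z]mulr1; apply: ler_wpM2l => //.
  have cv_ne : c v <> c s0 by move=> /min_s; rewrite leNgt lt_vs.
  have := min_s0 v; lia.
have := F_eff s; have := cE s; rewrite /orient_div; lia.
Qed.

Definition deg_pos X : nat := (\sum_v pos_part (X v))%N.

Lemma deg_posN X : (deg_pos (fun v => - X v))%:Z = (deg_pos X)%:Z - deg X.
Proof.
rewrite /deg_pos /deg !(big_morph Posz PoszD (erefl _)) -sumrB.
by apply: eq_bigr => v _; have := pos_partNB (X v); lia.
Qed.

Section Loopless.
Hypothesis G_loopless : forall e : edg G, ~~ is_loop e.

Lemma nloops0 v : nloops v = 0%N.
Proof.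
apply: eq_card0 => e; rewrite inE; apply/negP => /eqP ends_e.
by have := G_loopless e; rewrite /is_loop ends_e eqxx.
Qed.

Lemma valency_loopless v : valency v = loopfree_valency v.
Proof. by rewrite valencyE nloops0 muln0 addn0. Qed.

Lemma valency_split pi v : injective pi ->
  valency v = (\sum_(w | (pi w < pi v)%R) adjm v w + \sum_(w | (pi v < pi w)%R) adjm v w)%N.
Proof.
move=> pi_inj; rewrite valency_loopless /loopfree_valency (bigID (fun w => pi w < pi v)) /=.
congr (_ + _)%N; rewrite (bigID (fun w => pi v < pi w)) /= [X in (_ + X)%N]big1 ?addn0.
  by apply: eq_bigl => w; case: (ltrP (pi w) (pi v)) => h /=; rewrite ?(lt_gtF h).
move=> w /andP[h1 h2]; have /pi_inj -> : pi w = pi v by apply/eqP; rewrite eq_le !leNgt h1 h2.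
exact: adjmii.
Qed.

Lemma canonical_div_subr_orient pi v : injective pi ->
  canonical_div v - orient_div pi v = orient_div (fun x => - pi x) v.
Proof.
move=> pi_inj; rewrite /canonical_div /orient_div (valency_split v pi_inj).
under [X in _ = X%:Z - 1]eq_bigl do rewrite ltrN2.
by rewrite PoszD; ring.
Qed.

Lemma deg_orient_div pi : injective pi -> deg (orient_div pi) = b1 G - 1.
Proof.
move=> pi_inj; rewrite /deg /orient_div sumrB /b1 sumr_const.
have sum_in : (2 * \sum_v \sum_(w | (pi w < pi v)%R) adjm v w = 2 * #|edg G|)%N.
  rewrite -sum_valency mul2n -addnn.
  rewrite [X in (_ + X)%N](exchange_big_dep xpredT) //= -big_split /=.
  apply: eq_bigr => v _; rewrite (valency_split v pi_inj); congr (_ + _)%N.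
  by apply: eq_bigr => w _; rewrite adjmC.
move/eqP: sum_in; rewrite eqn_pmul2l // => /eqP.
rewrite -(big_morph Posz PoszD (erefl _)) => ->.
by rewrite -mulr_natr mul1r; ring.
Qed.

End Loopless.
End Orientation.

Section Reduced.
Variable G : mgraph.
Variable q : vtx G.
Hypothesis G_conn : forall v w : vtx G, connect (@adj G) v w.
Implicit Types (v w : vtx G) (A U : {set vtx G}) (D X : divisor G).

Definition out_mult A v : nat := (\sum_(w | w \notin A) adjm w v)%N.

(* No nonempty set avoiding [q] can be fired without some vertex going into debt. *)
Definition q_reduced D : Prop :=
  forall A, A != set0 -> q \notin A -> exists2 v, v \in A & D v < (out_mult A v)%:Z.

Lemma not_q_reducedP D : ~ q_reduced D ->
  exists A, [/\ A != set0, q \notin A & forall v, v \in A -> (out_mult A v)%:Z <= D v].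
Proof.
move=> nD; apply: NNPP => no_A; apply: nD => A A0 qA; apply: NNPP => no_v.
apply: no_A; exists A; split=> // v vA.
by case: (lerP (out_mult A v)%:Z (D v)) => // lt_v; case: no_v; exists v.
Qed.

(* Dhar's burning algorithm: repeatedly burn a vertex of [U] that has fewer chips than
   burnt edges, and order the vertices by the time they burn. *)
Lemma burning_order D : q_reduced D -> forall U, q \notin U ->
  exists pi : vtx G -> int, [/\ {in U &, injective pi},
    (forall v w, v \in U -> w \notin U -> pi w < pi v) &
    (forall v, v \in U -> D v < (\sum_(w | (pi w < pi v)%R) adjm v w)%N%:Z)].
Proof.
move=> D_red U; move cU: #|U| => n; elim: n U cU => [|n IH] U cU qU.
  have -> : U = set0 by apply/eqP; rewrite -cards_eq0 cU.
  by exists (fun _ => 0); split=> [x y|v w|v]; rewrite inE.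
have U0 : U != set0 by rewrite -card_gt0 cU.
have [v vU Dv] := D_red U U0 qU.
have cUv : #|U :\ v| = n by rewrite (cardsD1 v U) vU add1n in cU; case: cU.
have qUv : q \notin U :\ v by rewrite inE negb_and qU orbT.
have [pi' [pi'_inj pi'_out pi'_lt]] := IH _ cUv qUv.
have vUv : v \notin U :\ v by rewrite !inE eqxx.
have inUv y : y \in U -> y != v -> y \in U :\ v by move=> yU yv; rewrite !inE yv.
pose pi x := if x \in U then pi' x else pi' v - 1.
have pi_out y w : y \in U -> w \notin U -> pi w < pi y.
  move=> yU wU; rewrite /pi yU (negbTE wU).
  have [->|yv] := eqVneq y v; first by rewrite gtrBl.
  by apply: lt_trans (pi'_out _ _ (inUv _ yU yv) vUv); rewrite gtrBl.
have pi'_v y : y \in U -> y != v -> pi' y != pi' v.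
  by move=> yU yv; rewrite gt_eqF // (pi'_out _ _ (inUv _ yU yv) vUv).
exists pi; split=> //.
- move=> x y xU yU; rewrite /pi xU yU.
  case: (eqVneq x v) => [->|xv]; case: (eqVneq y v) => [->|yv] // pi_xy.
  + by move: (pi'_v _ yU yv); rewrite pi_xy eqxx.
  + by move: (pi'_v _ xU xv); rewrite pi_xy eqxx.
  + by apply: pi'_inj; rewrite ?inUv.
- move=> y yU; have [->|yv] := eqVneq y v.
    apply: lt_le_trans Dv _; rewrite lez_nat /out_mult.
    under eq_bigr do rewrite adjmC.
    by apply: leq_sum_subpred => w wU; apply: pi_out.
  rewrite (eq_bigl (fun w => pi' w < pi' y)); first exact: pi'_lt (inUv _ yU yv).
  move=> w; case: (boolP (w \in U)) => wU; first by rewrite /pi wU yU.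
  have wUv : w \notin U :\ v by rewrite !inE negb_and wU orbT.
  by rewrite (pi_out _ _ yU wU) (pi'_out _ _ (inUv _ yU yv) wUv).
Qed.

Definition set_indicator A v : int := (v \in A)%:Z.

Lemma lapl_set_indicator A w : w \in A -> lapl (set_indicator A) w = - (out_mult A w)%:Z.
Proof.
move=> wA; rewrite /lapl /out_mult (bigID (fun v => v \in A)) /= big1 ?add0r.
  rewrite (big_morph Posz PoszD (erefl _)) -sumrN; apply: eq_bigr => v vA.
  by rewrite /set_indicator (negbTE vA) wA /= sub0r mulrN1.
by move=> v vA; rewrite /set_indicator vA wA subrr mulr0.
Qed.

Lemma fire_set_nonneg X A :
  (forall v, v != q -> 0 <= X v) -> (forall v, v \in A -> (out_mult A v)%:Z <= X v) ->
  forall v, v != q -> 0 <= X v + lapl (set_indicator A) v.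
Proof.
move=> X_ge0 A_ok v vq; case: (boolP (v \in A)) => vA.
  by rewrite lapl_set_indicator // subr_ge0 A_ok.
by rewrite addr_ge0 ?X_ge0 //; apply: lapl_ge0 => [|x]; rewrite /set_indicator ?(negbTE vA).
Qed.

Let N := (\max_v qdist q G_conn v)%N.
Let B := (\sum_(v : vtx G) \sum_w adjm v w).+1.

(* Vertices closer to [q] weigh more, by a factor exceeding the number of edges. *)
Definition weight v : int := (B ^ (N - qdist q G_conn v))%N%:Z.

Definition potential X : int := \sum_v X v * weight v.

Lemma weight_ge1 v : 1 <= weight v.
Proof. by rewrite lez_nat expn_gt0. Qed.

Lemma potential_le X : (forall v, v != q -> 0 <= X v) -> potential X <= deg X * weight q.
Proof.
move=> X_ge0; rewrite /deg mulr_suml; apply: ler_sum => v _.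
have [->|vq] := eqVneq v q; first by [].
by rewrite ler_wpM2l ?X_ge0 // /weight qdist_q lez_nat leq_pexp2l // subn0 leq_subr.
Qed.

Lemma potential_fire_gt0 A : A != set0 -> q \notin A ->
  0 < \sum_w lapl (set_indicator A) w * weight w.
Proof.
move=> /set0Pn[a aA] qA; pose c := set_indicator A; pose d := qdist q G_conn.
pose u0 := Order.arg_min a (fun x => x \in A) d.
have [u0A min_u0] : u0 \in A /\ forall u, u \in A -> (d u0 <= d u)%N.
  by rewrite /u0; case: arg_minP => // x xA min_x; split=> // u /min_x.
have u0q : u0 != q by apply: contraNneq qA => <-.
have [w0 [u0w0 dw0]] := qdist_parent G_conn u0q.
have w0A : w0 \notin A by apply/negP => /min_u0; rewrite /d -dw0 ltnn.
have weight_w0 : weight w0 = B%:Z * weight u0.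
  rewrite /weight -PoszM -expnS; congr (Posz (expn _ _)).
  have : (qdist q G_conn u0 <= N)%N by apply: leq_bigmax.
  by move: dw0; lia.
have weight_A w : w \in A -> weight w <= weight u0.
  by move=> /min_u0; rewrite /d => ?; rewrite /weight lez_nat leq_pexp2l //; lia.
pose gain w v := if (v \in A) && (w \notin A) then (adjm v w)%:Z * weight w else 0.
have gain_ge0 w v : 0 <= gain w v.
  by rewrite /gain; case: ifP => // _; rewrite mulr_ge0 // ltW // weight_ge1.
have term w v : gain w v - (adjm v w)%:Z * weight u0 <= (adjm v w)%:Z * (c v - c w) * weight w.
  have := weight_ge1 w; have := weight_ge1 u0.
  rewrite /gain /c /set_indicator.
  by case: (boolP (v \in A)) => vA; case: (boolP (w \in A)) => wA /=;
    [nia | nia | have := weight_A w wA; nia | nia].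
have total : \sum_(w : vtx G) \sum_(v : vtx G) (adjm v w)%:Z * weight u0 = (B%:Z - 1) * weight u0.
  rewrite exchange_big /= /B -addn1 PoszD addrK (big_morph Posz PoszD (erefl _)) mulr_suml.
  by apply: eq_bigr => v _; rewrite (big_morph Posz PoszD (erefl _)) mulr_suml.
have gain_w0 : gain w0 u0 <= \sum_w \sum_v gain w v.
  apply: le_trans (ler_sum_term (F := fun w => \sum_v gain w v) w0 _) => [|w].
    exact: (ler_sum_term (F := gain w0)).
  exact: sumr_ge0.
have lower : \sum_w \sum_v gain w v - (B%:Z - 1) * weight u0 <= \sum_w lapl c w * weight w.
  rewrite -total -sumrB; apply: ler_sum => w _; rewrite /lapl big_distrl -sumrB /=.
  by apply: ler_sum => v _; apply: term.
have gain_ge : B%:Z * weight u0 <= gain w0 u0.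
  have Bw_ge0 : 0 <= B%:Z * weight u0 by rewrite mulr_ge0 // ltW // weight_ge1.
  rewrite /gain u0A w0A -weight_w0 -[X in X <= _]mul1r.
  by rewrite ler_wpM2r -?weight_w0 // adjmC lez_nat.
rewrite -/c; have := weight_ge1 u0; rewrite mulrBl mul1r in lower; lia.
Qed.

Lemma fire_unreduced X : (forall v, v != q -> 0 <= X v) -> ~ q_reduced X ->
  exists Y, [/\ lin_equiv X Y, (forall v, v != q -> 0 <= Y v) & potential X < potential Y].
Proof.
move=> X_ge0 /not_q_reducedP[A [A0 qA A_ok]].
exists (fun w => X w + lapl (set_indicator A) w); split.
- exact: lin_equiv_lapl.
- exact: fire_set_nonneg.
rewrite -subr_gt0 /potential -sumrB.
under eq_bigr do rewrite mulrDl addrAC subrr add0r.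
exact: potential_fire_gt0.
Qed.

Lemma exists_q_reduced D : (forall v, v != q -> 0 <= D v) ->
  exists D', [/\ lin_equiv D D', (forall v, v != q -> 0 <= D' v) & q_reduced D'].
Proof.
move=> D_ge0; pose C := deg D * weight q.
suff gap_ind n X : C - potential X <= n%:Z -> lin_equiv D X -> (forall v, v != q -> 0 <= X v) ->
    exists D', [/\ lin_equiv D D', (forall v, v != q -> 0 <= D' v) & q_reduced D'].
  by apply: (gap_ind `|C - potential D|%N); [apply: lez_abs | apply: lin_equiv_refl |].
elim: n X => [|n IH] X gap DX X_ge0;
  have [X_red|/(fire_unreduced X_ge0)[Y [XY Y_ge0 lt_XY]]] := classic (q_reduced X);
  try by exists X.
all: have DY := lin_equiv_trans DX XY.
all: have := potential_le Y_ge0; rewrite -(lin_equiv_deg DY) -/C => le_YC.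
  by lia.
by apply: (IH Y) => //; lia.
Qed.

End Reduced.

Section RiemannRoch.
Variable G : mgraph.
Variable q : vtx G.
Hypothesis G_conn : forall v w : vtx G, connect (@adj G) v w.
Implicit Types (v w : vtx G) (pi : vtx G -> int) (D E F : divisor G).
Local Notation K := (@canonical_div G).

Lemma equiv_effective_or_orient D : equiv_effective D \/
  exists pi, injective pi /\ equiv_effective (fun v => orient_div pi v - D v).
Proof.
have [D1 [DD1 D1_ge0]] := equiv_nonneg_off_q q G_conn D.
have [D2 [D12 D2_ge0 D2_red]] := exists_q_reduced G_conn D1_ge0.
have DD2 := lin_equiv_trans DD1 D12.
have [D2q_ge0|D2q_lt0] := lerP 0 (D2 q).
  left; exists D2; split=> // v; have [->|vq] := eqVneq v q; [exact: D2q_ge0 | exact: D2_ge0].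
right; have qU : q \notin [set~ q] by rewrite !inE eqxx.
have [pi [pi_inj pi_out pi_lt]] := burning_order D2_red qU.
have pi_q w : w != q -> pi q < pi w by move=> wq; apply: pi_out; rewrite !inE ?eqxx.
exists pi; split.
  move=> x y pi_xy; case: (eqVneq x q) => xq; case: (eqVneq y q) => yq.
  - by rewrite xq yq.
  - by have := pi_q _ yq; rewrite -xq pi_xy ltxx.
  - by have := pi_q _ xq; rewrite -yq pi_xy ltxx.
  - by apply: pi_inj; rewrite // !inE.
exists (fun v => orient_div pi v - D2 v); split.
  move=> v; rewrite subr_ge0 /orient_div; have [->|vq] := eqVneq v q.
    rewrite big_pred0 => [|w]; first by move: D2q_lt0; lia.
    by have [->|/pi_q/lt_gtF] := eqVneq w q; rewrite ?ltxx.
  by have := pi_lt v; rewrite !inE vq => /(_ isT); lia.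
by apply: (principal_opp DD2) => w /=; ring.
Qed.

(* [n] is realised as [deg^+ (D' - nu_pi)] for some [D' ~ D] and some vertex ordering [pi];
   the least such [n] is [r(D) + 1]. *)
Definition orient_excess D (n : nat) : Prop :=
  exists D' pi, [/\ lin_equiv D D', injective pi &
    deg_pos (fun v => D' v - orient_div pi v) = n].

Definition min_orient_excess D n :=
  orient_excess D n /\ forall m, orient_excess D m -> (n <= m)%N.

Lemma exists_min_orient_excess D : exists n, min_orient_excess D n.
Proof.
apply: ex_minn_prop.
eexists; exists D, (fun v => (enum_rank v : nat)%:Z); split=> //; first exact: lin_equiv_refl.
by move=> x y [] /val_inj /enum_rank_inj.
Qed.

Lemma rank_prop_lt_orient_excess D k D' pi : rank_prop D k -> lin_equiv D D' -> injective pi ->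
  (k < deg_pos (fun v => (D' v - orient_div pi v)%R))%N.
Proof.
move=> rk DD' pi_inj; rewrite ltnNge; apply/negP.
set X : divisor G := fun v => D' v - orient_div pi v => X_le.
(* Remove the positive part of X from D, topped up at q to degree k. *)
pose extra v : int := (v == q)%:Z * (k - deg_pos X)%N%:Z.
pose E v := (pos_part (X v))%:Z + extra v.
have extra_ge0 v : 0 <= extra v by rewrite mulr_ge0.
have E_eff : effective E by move=> v; rewrite addr_ge0.
have degE : deg E = k%:Z.
  rewrite /deg big_split /= sum_delta -(big_morph Posz PoszD (erefl _)) -PoszD.
  by rewrite subnKC.
have [F [F_eff DEF]] := rk E E_eff degE.
have G_ne : (0 < #|vtx G|)%N by apply/card_gt0P; exists q.
apply: (orient_div_not_equiv_effective G_ne pi_inj).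
exists (fun v => F v + (pos_part (- X v))%:Z + extra v); split.
  by move=> v; rewrite !addr_ge0.
apply: (principal_add DEF (lin_equiv_sym DD')) => v /=.
by have := pos_partNB (X v); rewrite /E /X; lia.
Qed.

Lemma orient_excess_gt_rank_prop D k :
  (forall D' pi, lin_equiv D D' -> injective pi ->
     (k < deg_pos (fun v => (D' v - orient_div pi v)%R))%N) -> rank_prop D k.
Proof.
move=> excess_gt E E_eff degE.
have [//|[pi [pi_inj [F [F_eff DEF]]]]] := equiv_effective_or_orient (fun v => D v - E v).
pose D' v := orient_div pi v - F v + E v.
have DD' : lin_equiv D D' by apply: (principal_opp DEF) => w /=; rewrite /D'; ring.
have := excess_gt D' pi DD' pi_inj; rewrite ltnNge => /negP[].
rewrite -lez_nat -degE /deg_pos /deg (big_morph Posz PoszD (erefl _)).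
apply: ler_sum => v _; rewrite -(pos_part_id (E_eff v)) lez_nat leq_pos_part //.
by have := F_eff v; rewrite /D'; lia.
Qed.

Lemma rank_min_orient_excess D n : min_orient_excess D n -> rank D = n%:Z - 1.
Proof.
move=> [[D0 [pi0 [DD0 pi0_inj excess0]]] min_n]; apply: rankE.
have excess_gt k : (forall m, orient_excess D m -> k < m)%N -> rank_prop D k.
  move=> gt_k; apply: orient_excess_gt_rank_prop => D' pi DD' pi_inj.
  by apply: gt_k; exists D', pi.
have rank_prop_lt k : rank_prop D k -> (k < n)%N.
  by move/rank_prop_lt_orient_excess => /(_ D0 pi0 DD0 pi0_inj); rewrite excess0.
case: n excess0 min_n rank_prop_lt => [|k] _ min_n rank_prop_lt.
  by left; split=> // /equiv_effective_rank_prop0 /rank_prop_lt.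
right; split; first by apply/equiv_effective_rank_prop0/excess_gt => m /min_n; lia.
exists k; split; first by rewrite -addn1 PoszD addrK.
by split=> [|k' /rank_prop_lt]; first by apply: excess_gt => m /min_n.
Qed.

Section Loopless.
Hypothesis G_loopless : forall e : edg G, ~~ is_loop e.

(* Reversing the ordering turns [D' - nu_pi] into [- (K - D' - nu_(-pi))]. *)
Lemma min_orient_excess_canonical D n n' : min_orient_excess D n ->
  min_orient_excess (fun v => K v - D v) n' ->
  n'%:Z <= n%:Z - deg D + b1 G - 1.
Proof.
move=> [[D0 [pi0 [DD0 pi0_inj excess0]]] _] [_ min_n'].
have rev_inj : injective (fun x => - pi0 x) by move=> x y /oppr_inj /pi0_inj.
pose rev_excess := deg_pos (fun v => (K v - D0 v) - orient_div (fun x => - pi0 x) v).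
have : orient_excess (fun v => K v - D v) rev_excess.
  exists (fun v => K v - D0 v), (fun x => - pi0 x); split=> //.
  by apply: (principal_opp DD0) => w /=; ring.
move/min_n'; rewrite -lez_nat => /le_trans; apply.
have -> : rev_excess = deg_pos (fun v => - (D0 v - orient_div pi0 v)).
  apply: eq_bigr => v _; rewrite -(canonical_div_subr_orient G_loopless _ pi0_inj).
  by congr pos_part; ring.
rewrite deg_posN excess0 degB (lin_equiv_deg DD0) (deg_orient_div G_loopless pi0_inj); lia.
Qed.

Theorem riemann_roch_loopless D :
  rank D - rank (fun v => K v - D v) = deg D - b1 G + 1.
Proof.
have [n1 min1] := exists_min_orient_excess D.
have [n2 min2] := exists_min_orient_excess (fun v => K v - D v).
have KKD : (fun v => K v - (K v - D v)) = D.
  by apply: functional_extensionality => v; ring.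
have le12 := min_orient_excess_canonical min1 min2.
have := min_orient_excess_canonical min2; rewrite KKD => /(_ _ min1).
rewrite (rank_min_orient_excess min1) (rank_min_orient_excess min2) degB deg_canonical_div; lia.
Qed.

End Loopless.
End RiemannRoch.

Section Subdivision.
Variable H : mgraph.
Local Notation Hh := (hat H).

Lemma sum_loop_edge (F : edg H -> nat) :
  (\sum_(l : loop_edge H) F (val l) = \sum_(e | is_loop e) F e)%N.
Proof.
rewrite (reindex_omap (val : loop_edge H -> edg H) insub); last by move=> i Pi; rewrite insubT.
apply: eq_bigl => -[i iA] /=; rewrite insubT /=.
by apply/esym/andP; split=> //; apply/eqP; congr Some; apply: val_inj; rewrite SubK.
Qed.

Lemma hat_loopless (e : edg Hh) : ~~ is_loop e.
Proof. by case: e => [e|l]; rewrite /is_loop //=; case: insubP. Qed.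

Lemma valency_hat_inl (v : vtx H) : @valency Hh (inl v) = valency v.
Proof.
rewrite /valency big_sumType /=.
have ends_inl (e : edg H) :
   (((hat_ends (inl e)).1 == inl v) + ((hat_ends (inl e)).2 == inl v))%N =
   (((ends e).1 == v) + (~~ is_loop e && ((ends e).2 == v)))%N.
  by rewrite /=; case: insubP => [l -> _|->] /=; rewrite ?addn0.
rewrite (eq_bigr _ (fun e _ => ends_inl e)) /=.
rewrite (sum_loop_edge (fun e => ((ends e).1 == v) : nat)) [X in (_ + X)%N]big_mkcond -big_split /=.
apply: eq_bigr => e _; case: (boolP (is_loop e)) => /= e_loop; last by rewrite addn0.
by rewrite addn0 addnC; move: e_loop; rewrite /is_loop => /eqP ->.
Qed.

Lemma valency_hat_inr (l : loop_edge H) : @valency Hh (inr l) = 2%N.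
Proof.
rewrite /valency big_sumType /=.
have ends_inl : forall e : edg H,
   (((hat_ends (inl e)).1 == inr l) + ((hat_ends (inl e)).2 == inr l))%N = (e == val l)%N.
  move=> e /=; case: insubP => [l' _ <-|e_nloop] //=.
  suff -> : (e == val l) = false by [].
  by apply/eqP => el; move: e_nloop; rewrite el (valP l).
rewrite (eq_bigr _ (fun e _ => ends_inl e)) sum_pred1_nat.
by rewrite (eq_bigr (fun l' => (l' == l) : nat)) ?sum_pred1_nat // => l' _ /=; rewrite addn0.
Qed.

Lemma canonical_div_hat : @canonical_div Hh =1 hat_ext (@canonical_div H).
Proof. by case=> [v|l]; rewrite /canonical_div /= ?valency_hat_inl ?valency_hat_inr. Qed.

Lemma edge_mult_hat_inl (v w : vtx H) :
  v != w -> @edge_mult Hh (inl v) (inl w) = edge_mult v w.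
Proof.
move=> vw; rewrite /edge_mult !card_predE_sum big_sumType /= [X in (_ + X)%N]big1 ?addn0 //.
apply: eq_bigr => e _; case: insubP => [l e_loop _|_] /=; last first.
  by case: (ends e) => a b /=; rewrite !xpair_eqE.
move: e_loop; rewrite /is_loop; case: (ends e) => a b /= /eqP <-.
rewrite !xpair_eqE /= !andbF /=; symmetry.
case: (eqVneq a v) => [->|] //=; last by rewrite andbF.
by case: eqP => //= wv; move: vw; rewrite wv eqxx.
Qed.

Lemma edge_mult_hat_inl_inr (v : vtx H) (l : loop_edge H) :
  v != (ends (val l)).1 -> @edge_mult Hh (inl v) (inr l) = 0%N.
Proof.
move=> vl; apply: eq_card0 => x; rewrite !inE; case: x => [e|l'] /=.
  case: insubP => [l'' _ l''_e|_] /=; rewrite !xpair_eqE; apply/negP.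
    move=> /orP[/andP[/eqP[ends1] /eqP[l''l]]|/andP[/eqP//]].
    by move: vl; rewrite -ends1 -l''_e l''l eqxx.
  by move=> /orP[/andP[_ /eqP//]|/andP[/eqP//]].
by apply/negP => /andP[/eqP[ll'] /eqP[vl']]; move: vl; rewrite -vl' -ll' eqxx.
Qed.

Lemma edge_mult_hat_inr (l l' : loop_edge H) : @edge_mult Hh (inr l) (inr l') = 0%N.
Proof.
apply: eq_card0 => x; rewrite !inE; case: x => [e|l''] /=.
  by case: insubP => [l0 _ _|_] /=; apply/negP => /andP[/eqP//].
by rewrite !xpair_eqE; apply/negP => /orP[/andP[_ /eqP//]|/andP[_ /eqP//]].
Qed.

(* A subdivision vertex fires together with the base point of its loop. *)
Lemma principal_hat_ext (P : divisor H) : principal P -> principal (hat_ext P).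
Proof.
move=> /principalP[c cE]; apply/principalP.
exists (fun x : vtx Hh => match x with inl v => c v | inr l => c (ends (val l)).1 end).
case=> [w|l] /=.
  rewrite cE /lapl big_sumType /= [X in _ = _ + X]big1 ?addr0.
    apply: eq_bigr => v _; have [->|vw] := eqVneq v w; first by rewrite !subrr !mulr0.
    have inl_eq : (inl v == inl w :> vtx Hh) = (v == w) by [].
    by rewrite /adjm inl_eq (negbTE vw) edge_mult_hat_inl.
  move=> l _; have [->|lw] := eqVneq (ends (val l)).1 w; first by rewrite subrr mulr0.
  by rewrite (@adjmC Hh (inr l) (inl w)) /adjm /= edge_mult_hat_inl_inr ?mul0r // eq_sym.
rewrite /lapl big_sumType /= !big1 ?addr0 //.
  by move=> l' _; rewrite /adjm; case: ifP => _; rewrite ?edge_mult_hat_inr mul0r.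
move=> v _; have [->|vl] := eqVneq v (ends (val l)).1; first by rewrite subrr mulr0.
by rewrite /adjm /= edge_mult_hat_inl_inr ?mul0r.
Qed.

Lemma deg_hat_ext (D : divisor H) : deg (hat_ext D) = deg D.
Proof. by rewrite /deg big_sumType /= [X in _ + X]big1 ?addr0. Qed.

Lemma b1_hat : b1 Hh = b1 H.
Proof. by rewrite /b1 /= !card_sum !PoszD; ring. Qed.

Lemma connect_hat_inl (x y : vtx H) : adj x y -> connect (@adj Hh) (inl x) (inl y).
Proof.
have [->|xy] := eqVneq x y; first by rewrite connect0.
move=> /existsP[e xy_e]; apply: connect1; apply/existsP; exists (inl e) => /=.
case: insubP => [l e_loop _|_] /=; last by move: xy_e; case: (ends e) => a b /=; rewrite !xpair_eqE.
move: e_loop xy_e; rewrite /is_loop; case: (ends e) => a b /= /eqP ->.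
by rewrite !xpair_eqE => /orP[/andP[/eqP-> /eqP yb]|/andP[/eqP-> /eqP xb]];
  move: xy; rewrite ?yb ?xb eqxx.
Qed.

Lemma hat_connected : (forall v w : vtx H, connect (@adj H) v w) ->
  forall x y : vtx Hh, connect (@adj Hh) x y.
Proof.
move=> H_conn.
have hat_sym : connect_sym (@adj Hh).
  apply: sym_connect_sym => a b; rewrite /adj.
  by apply/existsP/existsP => -[e ab_e]; exists e; rewrite orbC.
have conn_inl v w : connect (@adj Hh) (inl v) (inl w).
  have /connectP[p p_adj ->] := H_conn v w.
  elim: p v p_adj => [|y p IHp] v /=; first by rewrite connect0.
  by move=> /andP[vy p_adj]; apply: connect_trans (connect_hat_inl vy) (IHp _ p_adj).
have to_inl x : exists v, connect (@adj Hh) x (inl v).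
  case: x => [v|l]; first by exists v.
  exists (ends (val l)).1; apply: connect1; apply/existsP; exists (inr l) => /=.
  by rewrite eqxx.
move=> x y; have [v xv] := to_inl x; have [w yw] := to_inl y.
by apply: connect_trans xv (connect_trans (conn_inl v w) _); rewrite hat_sym.
Qed.

End Subdivision.

Section VirtualGraph.
Variables (G : mgraph) (om : vtx G -> nat).
Local Notation Gom := (virt om).

Lemma adjm_virt (v w : vtx G) : @adjm Gom v w = adjm v w.
Proof.
rewrite /adjm; case: (eqVneq v w) => // vw.
rewrite /edge_mult !card_predE_sum big_sumType /= [X in (_ + X)%N]big1 ?addn0 //.
move=> l _; rewrite !xpair_eqE.
by case: eqP => [tv|] /=; case: eqP => [tw|] //=; move: vw; rewrite -tv -tw eqxx.
Qed.

Lemma principal_virt (P : divisor G) : principal P -> @principal Gom P.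
Proof.
move=> /principalP[c cE]; apply/principalP; exists c => w; rewrite cE.
by apply: eq_bigr => v _; rewrite adjm_virt.
Qed.

Lemma virt_connected : (forall v w : vtx G, connect (@adj G) v w) ->
  forall v w : vtx Gom, connect (@adj Gom) v w.
Proof.
move=> G_conn v w; apply: (@connect_sub (vtx G) (@adj G) (@adj Gom)); last exact: G_conn.
by move=> x y /existsP[e xy_e]; apply: connect1; apply/existsP; exists (inl e).
Qed.

Lemma b1_virt : b1 Gom = wgenus om.
Proof.
rewrite /wgenus /b1 /= card_sum card_tagged sumnE big_map big_enum /=.
rewrite (eq_bigr om) => [|v _]; last by rewrite card_ord.
by rewrite PoszD (big_morph Posz PoszD (erefl _)); ring.
Qed.

End VirtualGraph.

Theorem theorem3p8 (G : mgraph) (om : vtx G -> nat) (HG : connected G) :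
  (forall D : divisor G,
     wrank om D - wrank om (fun v => wcanonical om v - D v)
       = deg D - wgenus om + 1) /\
  (forall D D' : divisor G, lin_equiv D D' -> wrank om D = wrank om D').
Proof.
case: HG => /card_gt0P[v0 _] G_conn.
have Gom_conn := hat_connected (@virt_connected G om G_conn).
split=> [D|D D' DD']; rewrite /wrank /rank_sharp.
  have -> : @hat_ext (virt om) (fun v => wcanonical om v - D v) =
            (fun x => @canonical_div (hat (virt om)) x - @hat_ext (virt om) D x).
    by apply: functional_extensionality => x; rewrite canonical_div_hat; case: x.
  rewrite (@riemann_roch_loopless (hat (virt om)) (inl v0) Gom_conn (@hat_loopless _)).
  by rewrite deg_hat_ext b1_hat b1_virt.
apply: rank_lin; apply: (principal_eqfun (principal_hat_ext (@principal_virt G om _ DD'))).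
by case.
Qed.
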